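(* Let $k$ be a field, $A,B$ abelian groups, $R$ an $A$-graded and $S$ a $B$-graded finite-dimensional Frobenius $k$-algebra with forms $\langle-,-\rangle_R,\langle-,-\rangle_S$ and Nakayama automorphisms $\nu_R,\nu_S$, and $t:A\otimes B\to k^\times$ a bicharacter. Suppose there exist $\sigma_R\in A$, $\sigma_S\in B$ such that for homogeneous $r,r'\in R$, $\langle r,r'\rangle_R\neq0$ implies $|r|+|r'|+\sigma_R=0$, and for homogeneous $s,s'\in S$, $\langle s,s'\rangle_S\ne0$ implies $|s|+|s'|+\sigma_S=0$. Let $\nu$ be the Nakayama automorphism of $R\otimes^tS$ with respect to the form $\langle r\otimes s,r'\otimes s'\rangle=t(|r'|,|s|)\langle r,r'\rangle_R\langle s,s'\rangle_S$. Then for homogeneous $a\in R$, $b\in S$, $$\nu(a\otimes b)=t(|a|,\sigma_S)\,t(\sigma_R,|b|)^{-1}\,\nu_R(a)\otimes\nu_S(b).$$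
   Context: $R\otimes^tS$ is $R\otimes S$ with product $(r\otimes s)(r'\otimes s')=t(|r'|,|s|)rr'\otimes ss'$; $|\cdot|$ denotes degree. The Nakayama automorphism $\nu$ of a Frobenius algebra with form $\langle-,-\rangle$ is defined by $\langle x,y\rangle=\langle y,\nu(x)\rangle$ for all $y$. *)

From HB Require Import structures.
From mathcomp Require Import all_boot all_order all_algebra.
From mathcomp Require Import falgebra.
Set Implicit Arguments. Unset Strict Implicit. Unset Printing Implicit Defensive.
Import GRing.Theory.
Local Open Scope ring_scope.

Definition bilinear_form (k : fieldType) (V : lmodType k) (f : V -> V -> k) :=
  (forall c x x' y, f (c *: x + x') y = c * f x y + f x' y) /\
  (forall c x y y', f x (c *: y + y') = c * f x y + f x y').

Definition frobenius_form (k : fieldType) (R : falgType k) (f : R -> R -> k) :=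
  [/\ bilinear_form f,
      (forall x y z, f (x * y) z = f x (y * z)) &
      (forall x, (forall y, f x y = 0) -> x = 0)].

Definition nakayama (V : Type) (k : Type) (f : V -> V -> k) (nu : V -> V) :=
  forall x y, f x y = f y (nu x).

(* An A-grading of the k-algebra R, given by the homogeneous components
   Rg a (a in A): R is the (internal) direct sum of the Rg a, and the
   grading is multiplicative. *)
Definition graded (k : fieldType) (A : zmodType) (R : falgType k)
    (Rg : A -> {vspace R}) :=
  [/\ (forall r : R, exists s : seq A, r \in (\sum_(a <- s) Rg a)%VS),
      (forall (s : seq A) (f : A -> R), uniq s -> (forall a, f a \in Rg a) ->
          \sum_(a <- s) f a = 0 -> forall a, a \in s -> f a = 0),
      (1 \in Rg 0) &
      (forall a b x y, x \in Rg a -> y \in Rg b -> x * y \in Rg (a + b))].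

(* A bicharacter A x B -> k^x (equivalently a homomorphism A (x) B -> k^x). *)
Definition bicharacter (k : fieldType) (A B : zmodType) (t : A -> B -> k) :=
  [/\ (forall a b, t a b != 0),
      (forall a a' b, t (a + a') b = t a b * t a' b) &
      (forall a b b', t a (b + b') = t a b * t a b')].

(* Concrete model of the underlying vector space of R (x) S: matrices of
   size dim R x dim S, with r (x) s the outer product of the coordinate
   vectors of r and s in the canonical bases vbasis {:R}, vbasis {:S}. *)
Definition tens_space (k : fieldType) (R S : falgType k) :=
  'M[k]_(\dim {:R}, \dim {:S}).

Definition tens (k : fieldType) (R S : falgType k) (r : R) (s : S)
  : tens_space R S := (passmx.rVof (vbasis {:R}) r)^T *m (passmx.rVof (vbasis {:S}) s).

(* Pairing with the twisted form, the Nakayama property reduces the claim to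
   <x (x) y, W> = <W, c nuR x (x) nuS y> for all W, and by linearity to W = r' (x) s'
   with r', s' homogeneous.  Only elements of degree -|r'| - sigR pair nontrivially
   with r', so against r' (x) s' the twisted form is t(-|r'| - sigR, |s'|) times the
   untwisted pairing fR (x) fS; as the latter is nondegenerate, so is the twisted form
   in its second argument.  When <x, r'> <y, s'> <> 0 the degrees of r', s' are
   -|x| - sigR and -|y| - sigS, and the two twists differ exactly by
   t(|x|, sigS) / t(sigR, |y|) by bimultiplicativity of t. *)

From HB Require Import structures.
From mathcomp Require Import all_boot all_order all_algebra.
From mathcomp Require Import falgebra.
From mathcomp Require Import ring.
Set Implicit Arguments.
Unset Strict Implicit.
Unset Printing Implicit Defensive.
Import GRing.Theory.
Local Open Scope ring_scope.

Section ScalarFunctional.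
Variables (k : fieldType) (V : lmodType k) (g : V -> k).
Hypothesis gL : scalar g.

Let gS : {scalar V} := HB.pack g (GRing.isLinear.Build _ _ _ _ g gL).

Lemma scalar_fun0 : g 0 = 0. Proof. exact: (linear0 gS). Qed.
Lemma scalar_funD x y : g (x + y) = g x + g y. Proof. exact: (linearD gS). Qed.
Lemma scalar_funB x y : g (x - y) = g x - g y. Proof. exact: (linearB gS). Qed.
Lemma scalar_funZ c x : g (c *: x) = c * g x. Proof. exact: (scalarZ gS). Qed.
Lemma scalar_fun_sum I (r : seq I) (P : pred I) (F : I -> V) :
  g (\sum_(i <- r | P i) F i) = \sum_(i <- r | P i) g (F i).
Proof. exact: (linear_sum gS). Qed.

End ScalarFunctional.

Lemma scalar_comp (k : fieldType) (U V : lmodType k) (g : V -> k) (f : U -> V) :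
  scalar g -> linear f -> scalar (g \o f).
Proof. by move=> gL fL c x y; rewrite /= fL gL. Qed.

Lemma bilinear_scalarl (k : fieldType) (V : lmodType k) (f : V -> V -> k) y :
  bilinear_form f -> scalar (f^~ y).
Proof. by case=> fl _ c x x'; apply: fl. Qed.

Lemma bilinear_scalarr (k : fieldType) (V : lmodType k) (f : V -> V -> k) x :
  bilinear_form f -> scalar (f x).
Proof. by case=> _ fr c y y'; apply: fr. Qed.

Lemma scalar_mull (k : fieldType) (V : lmodType k) (g : V -> k) c :
  scalar g -> scalar (fun x => c * g x).
Proof. by move=> gL d x y; rewrite gL mulrDr mulrCA. Qed.

Lemma scalar_zero (k : fieldType) (V : lmodType k) : scalar (fun _ : V => 0 : k).
Proof. by move=> c x y; rewrite mulr0 addr0. Qed.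

Section FiniteBilinearForm.
Variables (k : fieldType) (V : vectType k).
Local Notation n := (\dim {:V}).
Local Notation e := (vbasis {:V}).

Lemma scalar_rVof (g : V -> k) u :
  scalar g -> g u = \sum_i passmx.rVof e u 0 i * g e`_i.
Proof.
move=> gL; rewrite -{1}(passmx.rVofK (vbasisP fullv) u) (scalar_fun_sum gL).
by apply: eq_bigr => i _; rewrite (scalar_funZ gL).
Qed.

Variable f : V -> V -> k.
Hypothesis fB : bilinear_form f.

Definition nondegl := forall x, (forall y, f x y = 0) -> x = 0.
Definition nondegr := forall y, (forall x, f x y = 0) -> y = 0.

Lemma bilinear_nondegr : nondegl -> nondegr.
Proof.
move=> fndl z fz0.
pose gram : 'M[k]_n := \matrix_(i, j) f e`_i e`_j.
have gram_free : row_free gram.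
  apply/inj_row_free => u /rowP u_gram0; apply/eqP.
  rewrite -(passmx.vecof_eq0 (vbasisP fullv)); apply/eqP/fndl => y.
  rewrite (scalar_rVof _ (bilinear_scalarr _ fB)) big1 // => j _.
  suff -> : f (passmx.vecof e u) e`_j = 0 by rewrite mulr0.
  have := u_gram0 j; rewrite !mxE => <-.
  rewrite (scalar_fun_sum (bilinear_scalarl _ fB)); apply: eq_bigr => i _.
  by rewrite (scalar_funZ (bilinear_scalarl _ fB)) mxE.
have gramT_free : row_free gram^T by rewrite /row_free mxrank_tr.
apply/eqP; rewrite -(passmx.rVof_eq0 (vbasisP fullv)) -(mulmx_free_eq0 _ gramT_free).
apply/eqP/rowP => i; rewrite !mxE -[RHS](fz0 e`_i).
rewrite [RHS](scalar_rVof _ (bilinear_scalarr _ fB)); apply: eq_bigr => j _.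
by rewrite !mxE.
Qed.

Lemma nondegr_coord_eq0 (w : 'rV_n) :
  nondegr -> (forall x, \sum_i w 0 i * f x e`_i = 0) -> w = 0.
Proof.
move=> fndr w0; apply/eqP; rewrite -(passmx.vecof_eq0 (vbasisP fullv)).
apply/eqP/fndr => x; rewrite -(w0 x) (scalar_fun_sum (bilinear_scalarr _ fB)).
by apply: eq_bigr => i _; rewrite (scalar_funZ (bilinear_scalarr _ fB)).
Qed.

End FiniteBilinearForm.

Section Tensor.
Variables (k : fieldType) (R S : falgType k).
Local Notation eR := (vbasis {:R}).
Local Notation eS := (vbasis {:S}).

Lemma tensE (r : R) (s : S) i j :
  tens r s i j = passmx.rVof eR r 0 i * passmx.rVof eS s 0 j.
Proof. by rewrite /tens mxE big_ord1 mxE. Qed.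

Lemma tens_linearl (s : S) : linear (fun r : R => tens r s).
Proof.
by move=> c r r'; apply/matrixP => i j; rewrite !(tensE, mxE) linearP /= mulrDl mulrA.
Qed.

Lemma tens_linearr (r : R) : linear (@tens _ R S r).
Proof.
by move=> c s s'; apply/matrixP => i j; rewrite !(tensE, mxE) linearP /= mulrDr mulrCA.
Qed.

Lemma delta_mx_tens i j : delta_mx i j = tens eR`_i eS`_j.
Proof. by rewrite /tens !passmx.rVofE ?vbasisP // trmx_delta mul_delta_mx. Qed.

End Tensor.

Lemma graded_scalar_ext (k : fieldType) (A : zmodType) (R : falgType k)
    (Rg : A -> {vspace R}) (g h : R -> k) :
  graded Rg -> scalar g -> scalar h ->
  (forall a r, r \in Rg a -> g r = h r) -> g =1 h.
Proof.
case=> span _ _ _ gL hL gh r; have [s] := span r.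
elim: s r => [|a s IHs] r; first by rewrite big_nil memv0 => /eqP->; rewrite !scalar_fun0.
rewrite big_cons => /memv_addP[u Hu [v Hv ->]].
by rewrite (scalar_funD gL) (scalar_funD hL) (gh a) // IHs.
Qed.

Lemma tens_scalar_ext (k : fieldType) (A B : zmodType) (R S : falgType k)
    (Rg : A -> {vspace R}) (Sg : B -> {vspace S}) (g h : tens_space R S -> k) :
  graded Rg -> graded Sg -> scalar g -> scalar h ->
  (forall a b r s, r \in Rg a -> s \in Sg b -> g (tens r s) = h (tens r s)) ->
  g =1 h.
Proof.
move=> gR gS gL hL gh.
have gh_tens r s : g (tens r s) = h (tens r s).
  move: r; apply: (graded_scalar_ext gR).
  - exact: scalar_comp gL (tens_linearl s).
  - exact: scalar_comp hL (tens_linearl s).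
  move=> a {}r Hr; move: s; apply: (graded_scalar_ext gS).
  - exact: scalar_comp gL (tens_linearr r).
  - exact: scalar_comp hL (tens_linearr r).
  by move=> b {}s Hs; apply: gh Hr Hs.
move=> Z; rewrite [Z]matrix_sum_delta !(scalar_fun_sum gL, scalar_fun_sum hL).
apply: eq_bigr => i _; rewrite !(scalar_fun_sum gL, scalar_fun_sum hL).
by apply: eq_bigr => j _; rewrite (scalar_funZ gL) (scalar_funZ hL) delta_mx_tens gh_tens.
Qed.

Section ProductForm.
Variables (k : fieldType) (R S : falgType k) (fR : R -> R -> k) (fS : S -> S -> k).
Hypotheses (bR : bilinear_form fR) (bS : bilinear_form fS).
Local Notation eR := (vbasis {:R}).
Local Notation eS := (vbasis {:S}).

Definition prod_form (r : R) (s : S) (Z : tens_space R S) :=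
  \sum_i \sum_j Z i j * fR r eR`_i * fS s eS`_j.

Lemma prod_form_tens r s u v : prod_form r s (tens u v) = fR r u * fS s v.
Proof.
rewrite (scalar_rVof _ (bilinear_scalarr _ bR)) (scalar_rVof v (bilinear_scalarr _ bS)).
rewrite big_distrl; apply: eq_bigr => i _; rewrite big_distrr; apply: eq_bigr => j _ /=.
by rewrite tensE -mulrA mulrACA.
Qed.

Lemma prod_form_scalar r s : scalar (prod_form r s).
Proof.
move=> c Y Z; rewrite /prod_form mulr_sumr -big_split; apply: eq_bigr => i _ /=.
by rewrite mulr_sumr -big_split; apply: eq_bigr => j _ /=; rewrite !mxE; ring.
Qed.

Lemma prod_form_scalarl s Z : scalar (fun r => prod_form r s Z).
Proof.
move=> c r r'; rewrite /prod_form mulr_sumr -big_split; apply: eq_bigr => i _ /=.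
rewrite mulr_sumr -big_split; apply: eq_bigr => j _ /=.
by rewrite (bilinear_scalarl _ bR); ring.
Qed.

Lemma prod_form_scalarr r Z : scalar (fun s => prod_form r s Z).
Proof.
move=> c s s'; rewrite /prod_form mulr_sumr -big_split; apply: eq_bigr => i _ /=.
rewrite mulr_sumr -big_split; apply: eq_bigr => j _ /=.
by rewrite (bilinear_scalarl _ bS); ring.
Qed.

Hypotheses (ndR : nondegl fR) (ndS : nondegl fS).

Lemma prod_form_nondeg Z : (forall r s, prod_form r s Z = 0) -> Z = 0.
Proof.
move=> Z0.
have rowZ0 i s : \sum_j Z i j * fS s eS`_j = 0.
  pose w := \row_i0 \sum_j Z i0 j * fS s eS`_j.
  suff /rowP/(_ i) : w = 0 by rewrite !mxE.
  apply: (nondegr_coord_eq0 bR (bilinear_nondegr bR ndR)) => r.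
  rewrite -[RHS](Z0 r s) /prod_form.
  apply: eq_bigr => i0 _; rewrite mxE big_distrl; apply: eq_bigr => j _ /=.
  by rewrite mulrAC.
apply/matrixP => i j; rewrite mxE.
suff /rowP/(_ j) : row i Z = 0 by rewrite !mxE.
apply: (nondegr_coord_eq0 bS (bilinear_nondegr bS ndS)) => s; rewrite -[RHS](rowZ0 i s).
by apply: eq_bigr => j0 _; rewrite mxE mulrC.
Qed.

End ProductForm.

Lemma bichar_swap (k : fieldType) (A B : zmodType) (t : A -> B -> k) :
  bicharacter t -> bicharacter (fun b a => t a b).
Proof. by case. Qed.

Lemma bicharNl (k : fieldType) (A B : zmodType) (t : A -> B -> k) a b :
  bicharacter t -> t (- a) b = (t a b)^-1.
Proof.
case=> t_neq0 tDl _.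
have t0b : t 0 b = 1 by apply: (mulfI (t_neq0 0 b)); rewrite -tDl addr0 mulr1.
by apply: (mulfI (t_neq0 a b)); rewrite -tDl subrr t0b divff.
Qed.

Lemma bicharNr (k : fieldType) (A B : zmodType) (t : A -> B -> k) a b :
  bicharacter t -> t a (- b) = (t a b)^-1.
Proof. by move/bichar_swap/bicharNl. Qed.

Lemma bichar_dual_degree (k : fieldType) (A B : zmodType) (t : A -> B -> k) a b sA sB :
  bicharacter t -> t (- a - sA) b = t a sB / t sA b * t a (- b - sB).
Proof.
move=> tB; case: (tB) => t_neq0 tDl tDr.
rewrite tDl tDr !(bicharNl _ _ tB) !(bicharNr _ _ tB).
by field; rewrite !t_neq0.
Qed.

Lemma dual_degreeE (A : zmodType) (a a' s : A) : a + a' + s = 0 -> a' = - a - s.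
Proof. by rewrite addrAC => /addr0_eq <-; rewrite opprD. Qed.

Section TwistedForm.
Variables (k : fieldType) (A B : zmodType) (R S : falgType k).
Variables (Rg : A -> {vspace R}) (Sg : B -> {vspace S}).
Variables (fR : R -> R -> k) (fS : S -> S -> k) (t : A -> B -> k) (sigR : A) (sigS : B).
Variable form : tens_space R S -> tens_space R S -> k.
Hypotheses (gR : graded Rg) (gS : graded Sg).
Hypotheses (bR : bilinear_form fR) (bS : bilinear_form fS) (bF : bilinear_form form).
Hypothesis tB : bicharacter t.
Hypothesis degR : forall a a' (r r' : R), r \in Rg a -> r' \in Rg a' -> fR r r' != 0 ->
  a + a' + sigR = 0.
Hypothesis degS : forall b b' (s s' : S), s \in Sg b -> s' \in Sg b' -> fS s s' != 0 ->
  b + b' + sigS = 0.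
Hypothesis formE : forall a a' b b' (r r' : R) (s s' : S),
  r \in Rg a -> r' \in Rg a' -> s \in Sg b -> s' \in Sg b' ->
  form (tens r s) (tens r' s') = t a' b * fR r r' * fS s s'.

Lemma form_tens_prod a' b' r' s' : r' \in Rg a' -> s' \in Sg b' ->
  forall Z, form (tens r' s') Z = t (- a' - sigR) b' * prod_form fR fS r' s' Z.
Proof.
move=> Hr' Hs'; apply: (tens_scalar_ext gR gS).
- exact: bilinear_scalarr.
- exact/scalar_mull/prod_form_scalar.
move=> a b r s Hr Hs; rewrite (formE Hr' Hr Hs' Hs) (prod_form_tens bR bS).
have [->|fRr'r_neq0] := eqVneq (fR r' r) 0; first by rewrite !(mulr0, mul0r).
by rewrite -(dual_degreeE (degR Hr' Hr fRr'r_neq0)) mulrA.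
Qed.

Lemma form_injr (ndR : nondegl fR) (ndS : nondegl fS) Z Z' :
  (forall W, form W Z = form W Z') -> Z = Z'.
Proof.
move=> ZZ'; apply/eqP; rewrite -subr_eq0; apply/eqP.
apply: (prod_form_nondeg bR bS ndR ndS) => r s.
have prod_hom0 a b r' s' :
    r' \in Rg a -> s' \in Sg b -> prod_form fR fS r' s' (Z - Z') = 0.
  move=> Hr' Hs'; case: tB => t_neq0 _ _.
  have : form (tens r' s') (Z - Z') = 0.
    by rewrite (scalar_funB (bilinear_scalarr _ bF)) ZZ' subrr.
  rewrite (form_tens_prod Hr' Hs') => /eqP.
  by rewrite mulf_eq0 (negPf (t_neq0 _ _)) => /eqP.
move: r; apply: (graded_scalar_ext gR).
- exact: prod_form_scalarl.
- exact: scalar_zero.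
move=> a r Hr; move: s; apply: (graded_scalar_ext gS).
- exact: prod_form_scalarr.
- exact: scalar_zero.
by move=> b s Hs; apply: prod_hom0 Hr Hs.
Qed.

Variables (nuR : R -> R) (nuS : S -> S).
Hypotheses (nkR : nakayama fR nuR) (nkS : nakayama fS nuS).

Lemma form_tens_nakayama a b x y a' b' r' s' :
  x \in Rg a -> y \in Sg b -> r' \in Rg a' -> s' \in Sg b' ->
  form (tens x y) (tens r' s') =
  form (tens r' s') ((t a sigS / t sigR b) *: tens (nuR x) (nuS y)).
Proof.
move=> Hx Hy Hr' Hs'.
rewrite (scalar_funZ (bilinear_scalarr _ bF)) (form_tens_prod Hr' Hs') (prod_form_tens bR bS).
rewrite -nkR -nkS (formE Hx Hr' Hy Hs').
have [->|fRxr'_neq0] := eqVneq (fR x r') 0; first by rewrite !(mulr0, mul0r).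
have [->|fSys'_neq0] := eqVneq (fS y s') 0; first by rewrite !(mulr0, mul0r).
rewrite (dual_degreeE (degR Hx Hr' fRxr'_neq0)) (dual_degreeE (degS Hy Hs' fSys'_neq0)).
by rewrite opprD !opprK addrK (bichar_dual_degree _ _ _ sigS tB) -!mulrA.
Qed.

End TwistedForm.

Theorem mainTheorem6
  (k : fieldType) (A B : zmodType)
  (R S : falgType k) (Rg : A -> {vspace R}) (Sg : B -> {vspace S})
  (fR : R -> R -> k) (fS : S -> S -> k) (nuR : R -> R) (nuS : S -> S)
  (t : A -> B -> k) (sigR : A) (sigS : B)
  (form : tens_space R S -> tens_space R S -> k)
  (nu : tens_space R S -> tens_space R S) :
  graded Rg -> graded Sg ->
  frobenius_form fR -> frobenius_form fS ->
  nakayama fR nuR -> nakayama fS nuS ->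
  bicharacter t ->
  (forall a a' (r r' : R), r \in Rg a -> r' \in Rg a' -> fR r r' != 0 ->
      a + a' + sigR = 0) ->
  (forall b b' (s s' : S), s \in Sg b -> s' \in Sg b' -> fS s s' != 0 ->
      b + b' + sigS = 0) ->
  bilinear_form form ->
  (forall a a' b b' (r r' : R) (s s' : S),
      r \in Rg a -> r' \in Rg a' -> s \in Sg b -> s' \in Sg b' ->
      form (tens r s) (tens r' s') = t a' b * fR r r' * fS s s') ->
  nakayama form nu ->
  forall (a : A) (b : B) (x : R) (y : S), x \in Rg a -> y \in Sg b ->
    nu (tens x y) = (t a sigS / t sigR b) *: tens (nuR x) (nuS y).
Proof.
move=> gR gS [bR _ ndR] [bS _ ndS] nkR nkS tB degR degS bF formE nk a b x y Hx Hy.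
apply: (form_injr gR gS bR bS bF tB degR formE ndR ndS) => W; rewrite -nk.
move: W; apply: (tens_scalar_ext gR gS); [exact: bilinear_scalarr | exact: bilinear_scalarl |].
move=> a' b' r' s' Hr' Hs'.
exact: (form_tens_nakayama gR gS bR bS bF tB degR degS formE nkR nkS Hx Hy Hr' Hs').
Qed.
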